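(* Let $(G,\cdot,\curlywedge,\xi,\delta)$ satisfy the standing assumptions below. For any subsets $H,H_1,H_2$ of $G$: (a) $H\subseteq F_\xi(H)$; (b) if $H_1\subseteq H_2$ then $F_\xi(H_1)\subseteq F_\xi(H_2)$; (c) $F_\xi(H)=H$ for every $f_\xi$-closed subset $H$ of $G$.
   Context: Standing assumptions: $(G,\cdot)$ is a semigroup, $(G,\curlywedge)$ a semilattice on $G$, $\xi,\delta\subseteq G\times G$. Write $x\leqslant y$ iff $x\curlywedge y=x$ (semilattice order $\zeta$), $x\downarrow y$ iff $(x,y)\in\xi$, $x\vdash y$ iff $(x,y)\in\delta$. Assume $\xi$ is left regular ($(u,v)\in\xi\Rightarrow(xu,xv)\in\xi$), $\zeta\subseteq\xi$, $\delta$ is a left ideal ($(x,y)\in\delta\Rightarrow(ux,y)\in\delta$), and for all $x,y,z,u,v\in G$: $x(y\curlywedge z)=xy\curlywedge xz$; $x\leqslant y\wedge u\leqslant v\wedge y\downarrow v\Rightarrow u\downarrow x$; $x\downarrow y\Rightarrow(x\curlywedge y)u=xu\curlywedge yu$. $G^*=G\cup\{e\}$ is $(G,\cdot)$ with a new identity $e$ adjoined, with conventions $e\leqslant e$, $e\vdash e$, $x\vdash e$ for all $x\in G$. $a\boxdot b\leqslant c$ abbreviates $a\vdash b\wedge ab\leqslant c$. For $H\subseteq G$, $F_\xi(H)=\{z\in G:\exists u,v\in G,\ \exists x,y,t\in G^*$ with $u\downarrow v$, $(u\curlywedge v)x\boxdot y\leqslant zt$, $u\in H$, $vx\in H\}$.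 A subset $H\subseteq G$ is $f_\xi$-closed if for all $x,y,t\in G^*$ and $z,u,v\in G$: $u\downarrow v\wedge(u\curlywedge v)x\boxdot y\leqslant zt\wedge u\in H\wedge vx\in H\Rightarrow z\in H$. *)

(* G* = G ∪ {e} is modelled as [option G], with [None] = e. *)
Set Implicit Arguments.

Section GStar.
Variable G : Type.
Variable mul : G -> G -> G.
Variable meet : G -> G -> G.
Variable xi delta : G -> G -> Prop.

Definition sle (x y : G) : Prop := meet x y = x.

Definition mulS (a b : option G) : option G :=
  match a, b with
  | None, _ => b
  | _, None => a
  | Some x, Some y => Some (mul x y)
  end.

Definition sleS (a b : option G) : Prop :=
  match a, b with
  | Some x, Some y => sle x y
  | None, None => True
  | _, _ => False
  end.

Definition deltaS (a b : option G) : Prop :=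
  match a, b with
  | Some x, Some y => delta x y
  | _, None => True
  | None, Some _ => False
  end.

(* a ⊡ b <= c  :=  a |- b /\ ab <= c *)
Definition boxdot_le (a b c : option G) : Prop :=
  deltaS a b /\ sleS (mulS a b) c.

Definition inS (H : G -> Prop) (a : option G) : Prop :=
  match a with Some x => H x | None => False end.

Definition F_xi (H : G -> Prop) (z : G) : Prop :=
  exists (u v : G) (x y t : option G),
    xi u v /\
    boxdot_le (mulS (Some (meet u v)) x) y (mulS (Some z) t) /\
    H u /\ inS H (mulS (Some v) x).

Definition f_xi_closed (H : G -> Prop) : Prop :=
  forall (x y t : option G) (z u v : G),
    xi u v ->
    boxdot_le (mulS (Some (meet u v)) x) y (mulS (Some z) t) ->
    H u -> inS H (mulS (Some v) x) -> H z.

End GStar.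


(* Every [z] of [H] lies in [F_xi H], witnessed by [u = v = z] and [x = y = t = e]: this
   needs only [z <= z], hence [z ↓ z].  Monotonicity is immediate from the shape of [F_xi],
   and [f_xi]-closedness is literally the reverse inclusion [F_xi H ⊆ H]. *)

Section ClosureOperator.
Variable G : Type.
Variables mul meet : G -> G -> G.
Variables xi delta : G -> G -> Prop.
Hypothesis meet_idem : forall x, meet x x = x.
Hypothesis zeta_xi : forall x y, sle meet x y -> xi x y.

Lemma F_xi_extensive (H : G -> Prop) (z : G) : H z -> F_xi mul meet xi delta H z.
Proof.
  intros Hz. exists z, z, None, None, None. simpl.
  assert (Hzz : sle meet z z) by apply meet_idem.
  unfold boxdot_le; simpl; rewrite meet_idem; auto.
Qed.

Lemma F_xi_monotone (H1 H2 : G -> Prop) :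
  (forall z, H1 z -> H2 z) ->
  forall z, F_xi mul meet xi delta H1 z -> F_xi mul meet xi delta H2 z.
Proof.
  intros Hsub z (u & v & x & y & t & Huv & Hbox & Hu & Hvx).
  exists u, v, x, y, t. split; [exact Huv |]. split; [exact Hbox |]. split; [exact (Hsub u Hu) |].
  destruct (mulS mul (Some v) x); simpl in *; auto.
Qed.

Lemma F_xi_closed_sub (H : G -> Prop) :
  f_xi_closed mul meet xi delta H -> forall z, F_xi mul meet xi delta H z -> H z.
Proof.
  intros Hclosed z (u & v & x & y & t & Huv & Hbox & Hu & Hvx).
  exact (Hclosed x y t z u v Huv Hbox Hu Hvx).
Qed.

End ClosureOperator.

Theorem lemma2 (G : Type) (mul meet : G -> G -> G) (xi delta : G -> G -> Prop)
  (* (G, .) is a semigroup *)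
  (mul_assoc : forall x y z, mul x (mul y z) = mul (mul x y) z)
  (* (G, ∧) is a semilattice *)
  (meet_assoc : forall x y z, meet x (meet y z) = meet (meet x y) z)
  (meet_comm : forall x y, meet x y = meet y x)
  (meet_idem : forall x, meet x x = x)
  (* xi is left regular *)
  (xi_lreg : forall x u v, xi u v -> xi (mul x u) (mul x v))
  (* zeta ⊆ xi *)
  (zeta_xi : forall x y, sle meet x y -> xi x y)
  (* delta is a left ideal *)
  (delta_lid : forall u x y, delta x y -> delta (mul u x) y)
  (* x(y ∧ z) = xy ∧ xz *)
  (ldistr : forall x y z, mul x (meet y z) = meet (mul x y) (mul x z))
  (* x <= y ∧ u <= v ∧ y ↓ v ⇒ u ↓ x *)
  (ax_xi : forall x y u v, sle meet x y -> sle meet u v -> xi y v -> xi u x)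
  (* x ↓ y ⇒ (x ∧ y)u = xu ∧ yu *)
  (rdistr : forall x y u, xi x y -> mul (meet x y) u = meet (mul x u) (mul y u)) :
  (forall (H : G -> Prop) (z : G), H z -> F_xi mul meet xi delta H z) /\
  (forall (H1 H2 : G -> Prop),
     (forall z, H1 z -> H2 z) ->
     forall z, F_xi mul meet xi delta H1 z -> F_xi mul meet xi delta H2 z) /\
  (forall (H : G -> Prop),
     f_xi_closed mul meet xi delta H ->
     forall z, F_xi mul meet xi delta H z <-> H z).
Proof.
  split; [| split].
  - intros H z. now apply F_xi_extensive.
  - apply F_xi_monotone.
  - intros H Hclosed z. split.
    + now apply F_xi_closed_sub.
    + now apply F_xi_extensive.
Qed.
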